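(* Let $S$ be a right zero semigroup or a left zero semigroup, and let $\omega$ be a weight on $S$. Then $\ell^{1}(S,\omega)$ is amenable if and only if $S$ is a singleton.
   Context: A semigroup $S$ is a left zero semigroup if $st=s$ for all $s,t\in S$, and a right zero semigroup if $st=t$ for all $s,t\in S$. A weight on $S$ is a function $\omega:S\to(0,\infty)$ with $\omega(st)\le\omega(s)\omega(t)$. The Beurling algebra $\ell^{1}(S,\omega)$ is the space of $f=\sum_s f(s)\delta_s$ with $\|f\|_\omega=\sum_s|f(s)|\omega(s)<\infty$, with convolution $\delta_s*\delta_t=\delta_{st}$. A Banach algebra $\mathcal{A}$ is amenable if for every Banach $\mathcal{A}$-bimodule $E$, every bounded derivation $\mathcal{A}\to E^*$ is inner. *)

From HB Require Import structures.
From mathcomp Require Import all_boot all_order all_algebra.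
From mathcomp Require Import all_classical all_reals all_analysis.
From mathcomp Require Import finmap complex.
Import numFieldTopology.Exports numFieldNormedType.Exports.
Import Order.TTheory GRing.Theory Num.Theory.

Set Implicit Arguments.
Unset Strict Implicit.
Unset Printing Implicit Defensive.

Local Open Scope ring_scope.

(** The complex numbers over a real field, as a numFieldType (so that the
    normed-module structure of mathcomp-analysis applies). *)
Definition Cplx (R : rcfType) : numFieldType := R[i].

(** Unordered (unconditional) sums of families indexed by a choiceType:
    limit of finite partial sums along the net of finite subsets. *)
Definition totally {I : choiceType} : set_system {fset I} :=
  filter_from setT (fun A : {fset I} => (fun B : {fset I} => is_true (A `<=` B)%fset)).

Definition partial_sum {I : choiceType} {V : zmodType}
  (x : I -> V) (A : {fset I}) : V := \sum_(i <- A) x i.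

Definition usum {I : choiceType} {K : numFieldType} {V : normedModType K}
  (x : I -> V) : V := lim (fmap (partial_sum x) totally).

Section Semigroups.
Variables (S : choiceType) (op : S -> S -> S).

Definition left_zero_sg := forall s t, op s t = s.
Definition right_zero_sg := forall s t, op s t = t.

Definition is_weight {R : realType} (w : S -> R) :=
  (forall s, 0 < w s) /\ (forall s t, w (op s t) <= w s * w t).
End Semigroups.

Section Beurling.
Variables (K : numFieldType) (S : choiceType) (op : S -> S -> S) (w : S -> K).

Definition in_l1 (f : S -> K) :=
  exists M : K, forall A : {fset S}, \sum_(i <- A) `|f i| * w i <= M.

Definition l1norm (f : S -> K) : K := usum (fun s => `|f s| * w s).

(** convolution: (f * g)(u) = sum_{(s,t) : st = u} f(s) g(t),
    i.e. the bilinear extension of delta_s * delta_t = delta_{st} *)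
Definition conv (f g : S -> K) : S -> K :=
  fun u => usum (fun p : S * S => if op p.1 p.2 == u then f p.1 * g p.2 else 0).

Definition addf (f g : S -> K) : S -> K := fun s => f s + g s.
Definition scalef (c : K) (f : S -> K) : S -> K := fun s => c * f s.

(** Banach l^1(S,w)-bimodule structure on a Banach space E:
    la f x = f . x, ra x f = x . f *)
Record banach_bimodule (E : completeNormedModType K)
  (la : (S -> K) -> E -> E) (ra : E -> (S -> K) -> E) : Prop := {
  la_addl : forall f g x, in_l1 f -> in_l1 g -> la (addf f g) x = la f x + la g x;
  la_scalel : forall c f x, in_l1 f -> la (scalef c f) x = c *: la f x;
  la_addr : forall f x y, in_l1 f -> la f (x + y) = la f x + la f y;
  la_scaler : forall c f x, in_l1 f -> la f (c *: x) = c *: la f x;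
  ra_addr : forall f g x, in_l1 f -> in_l1 g -> ra x (addf f g) = ra x f + ra x g;
  ra_scaler : forall c f x, in_l1 f -> ra x (scalef c f) = c *: ra x f;
  ra_addl : forall f x y, in_l1 f -> ra (x + y) f = ra x f + ra y f;
  ra_scalel : forall c f x, in_l1 f -> ra (c *: x) f = c *: ra x f;
  la_assoc : forall f g x, in_l1 f -> in_l1 g -> la (conv f g) x = la f (la g x);
  ra_assoc : forall f g x, in_l1 f -> in_l1 g -> ra x (conv f g) = ra (ra x f) g;
  lra_assoc : forall f g x, in_l1 f -> in_l1 g -> la f (ra x g) = ra (la f x) g;
  la_bounded : exists C : K, forall f x, in_l1 f -> `|la f x| <= C * l1norm f * `|x|;
  ra_bounded : exists C : K, forall f x, in_l1 f -> `|ra x f| <= C * l1norm f * `|x|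
}.

(** A bounded derivation D : l^1(S,w) -> E^* (D f is the functional D f : E -> K).
    The dual module actions are (f . phi)(x) = phi (x . f) and
    (phi . f)(x) = phi (f . x). *)
Record bounded_derivation (E : completeNormedModType K)
  (la : (S -> K) -> E -> E) (ra : E -> (S -> K) -> E) (D : (S -> K) -> E -> K) : Prop := {
  D_addr : forall f x y, in_l1 f -> D f (x + y) = D f x + D f y;
  D_scaler : forall c f x, in_l1 f -> D f (c *: x) = c * D f x;
  D_addl : forall f g x, in_l1 f -> in_l1 g -> D (addf f g) x = D f x + D g x;
  D_scalel : forall c f x, in_l1 f -> D (scalef c f) x = c * D f x;
  D_bounded : exists C : K, forall f x, in_l1 f -> `|D f x| <= C * l1norm f * `|x|;
  D_leibniz : forall f g x, in_l1 f -> in_l1 g ->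
      D (conv f g) x = D g (ra x f) + D f (la g x)
}.

Definition inner_derivation (E : completeNormedModType K)
  (la : (S -> K) -> E -> E) (ra : E -> (S -> K) -> E) (D : (S -> K) -> E -> K) :=
  exists phi : E -> K,
    [/\ forall x y, phi (x + y) = phi x + phi y,
        forall (c : K) x, phi (c *: x) = c * phi x,
        exists C : K, forall x, `|phi x| <= C * `|x| &
        forall f x, in_l1 f -> D f x = phi (ra x f) - phi (la f x)].

Definition amenable_l1 :=
  forall (E : completeNormedModType K) (la : (S -> K) -> E -> E)
    (ra : E -> (S -> K) -> E),
  banach_bimodule la ra ->
  forall D : (S -> K) -> E -> K,
  bounded_derivation la ra D -> inner_derivation la ra D.


End Beurling.

From Pilot Require Import Defs.
From HB Require Import structures.
From mathcomp Require Import all_boot all_order all_algebra.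
From mathcomp Require Import all_classical all_reals all_analysis.
From mathcomp Require Import finmap complex lra.
Import numFieldTopology.Exports numFieldNormedType.Exports.
Import Order.TTheory GRing.Theory Num.Theory.
Import ComplexField.Normc.
Local Notation Re := complex.Re.
Local Notation Im := complex.Im.
Local Open Scope classical_set_scope.
Local Open Scope ring_scope.
Local Open Scope complex_scope.

(* If S = {s}, then l^1(S, w) is spanned by the idempotent e = δ_s, and every
   bounded derivation D is inner, implemented by x ↦ D e (x·e) − D e (e·x).
   Conversely, weights on a left or right zero semigroup are ≥ 1 and convolution
   is f * g = (Σ f) g (resp. (Σ g) f), so the augmentation Σ is a bounded
   character. Making ℂ a bimodule through Σ on one side and 0 on the other,
   evaluation at a point s1 is a bounded derivation. An inner derivation of this
   kind is a multiple of Σ, hence takes the same value on all point masses, which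
   evaluation at s1 does not as soon as S has a second point. *)

Section ComplexCompleteness.
Context {R : realType}.
Local Notation C := (Cplx R).
Implicit Types (z l : C) (a b : R).

Lemma Re_le_normc z : `|Re z| <= normc z.
Proof. by case: z => a b /=; rewrite -sqrtr_sqr ler_wsqrtr // lerDl sqr_ge0. Qed.

Lemma Im_le_normc z : `|Im z| <= normc z.
Proof. by case: z => a b /=; rewrite -sqrtr_sqr ler_wsqrtr // lerDr sqr_ge0. Qed.

Lemma normc_le_ReIm z : normc z <= `|Re z| + `|Im z|.
Proof.
case: z => a b /=; rewrite -[leRHS]ger0_norm ?addr_ge0 // -sqrtr_sqr.
rewrite ler_wsqrtr // sqrrD !real_normK ?num_real //.
have := mulr_ge0 (normr_ge0 a) (normr_ge0 b); lra.
Qed.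

Lemma normc_ge0 z : 0 <= normc z.
Proof. by case: z => a b; exact: sqrtr_ge0. Qed.

Lemma norm_ltcR z a : (`|z| < a%:C) = (normc z < a).
Proof. exact: ltcR. Qed.

Lemma norm_lecR z a : (`|z| <= a%:C) = (normc z <= a).
Proof. exact: lecR. Qed.

Lemma ReB z1 z2 : Re (z1 - z2) = Re z1 - Re z2.
Proof. by case: z1 z2 => [? ?] [? ?]. Qed.

Lemma ImB z1 z2 : Im (z1 - z2) = Im z1 - Im z2.
Proof. by case: z1 z2 => [? ?] [? ?]. Qed.

Lemma gt0_complex z : 0 < z -> z = (Re z)%:C /\ 0 < Re z.
Proof. by case: z => a b; rewrite ltcE /= => /andP[/eqP -> ->]. Qed.

Lemma cauchy_map_contraction (g : C -> R) (F : set_system C) :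
  ProperFilter F -> (forall z1 z2, `|g z1 - g z2| <= normc (z1 - z2)) ->
  cauchy F -> cauchy (g @ F).
Proof.
move=> FF g_lip /cauchyP Fc; apply: cauchy_exP => e e_gt0.
have [z Fz] : exists z, F (ball z e%:C) by apply: Fc; rewrite ltcR.
exists (g z); rewrite /fmap /=; apply: filterS Fz => z'.
rewrite -!ball_normE /= => zz'.
by apply: le_lt_trans (g_lip _ _) _; rewrite -norm_ltcR.
Qed.

Lemma cvg_complex {T : Type} {F : set_system T} {FF : Filter F} (g : T -> C) a b :
  (fun t => Re (g t)) @ F --> a -> (fun t => Im (g t)) @ F --> b ->
  g @ F --> (a +i* b : C).
Proof.
move=> /cvgrPdist_lt ga /cvgrPdist_lt gb; apply/cvgrPdist_lt => e /gt0_complex[-> e_gt0].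
have e2_gt0 : 0 < Re e / 2 by rewrite divr_gt0.
near=> t; rewrite norm_ltcR; apply: le_lt_trans (normc_le_ReIm _) _.
have a_near : `|a - Re (g t)| < Re e / 2 by near: t; exact: ga.
have b_near : `|b - Im (g t)| < Re e / 2 by near: t; exact: gb.
rewrite ReB ImB /=; lra.
Unshelve. all: by end_near. Qed.

Lemma cvg_Re {T : Type} {F : set_system T} {FF : Filter F} {g : T -> C} {l} :
  g @ F --> l -> (fun t => Re (g t)) @ F --> Re l.
Proof.
move=> /cvgrPdist_lt gl; apply/cvgrPdist_lt => e e_gt0.
have /gl : 0 < e%:C :> C by rewrite ltcR.
apply: filterS => t; rewrite norm_ltcR -ReB; exact: le_lt_trans (Re_le_normc _).
Qed.

Lemma cvg_Im {T : Type} {F : set_system T} {FF : Filter F} {g : T -> C} {l} :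
  g @ F --> l -> (fun t => Im (g t)) @ F --> Im l.
Proof.
move=> /cvgrPdist_lt gl; apply/cvgrPdist_lt => e e_gt0.
have /gl : 0 < e%:C :> C by rewrite ltcR.
apply: filterS => t; rewrite norm_ltcR -ImB; exact: le_lt_trans (Im_le_normc _).
Qed.

Lemma cvg_normc {T : Type} {F : set_system T} {FF : Filter F} {g : T -> C} {l} :
  g @ F --> l -> (fun t => normc (g t)) @ F --> normc l.
Proof. by move=> /cvg_norm /cvg_Re. Qed.

Lemma complex_complete (F : set_system C) : ProperFilter F -> cauchy F -> cvg F.
Proof.
move=> FF Fc; apply/cvg_ex; exists (lim (@Re R @ F) +i* lim (@Im R @ F)).
apply: (@cvg_complex _ _ _ id); apply: cauchy_cvg;
  apply: cauchy_map_contraction => // z1 z2.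
- by rewrite -ReB Re_le_normc.
- by rewrite -ImB Im_le_normc.
Qed.

(* Attached to [Cplx R] itself, so that the scalar field is available as a
   Banach bimodule. *)
#[non_forgetful_inheritance]
HB.instance Definition _ := Uniform_isComplete.Build C complex_complete.

End ComplexCompleteness.

Instance totally_filter {I : choiceType} : ProperFilter (@totally I).
Proof.
apply: filter_from_proper; last by move=> A _; exists A; rewrite /= fsubset_refl.
apply: filter_fromT_filter; first by exists fset0.
by move=> A B; exists (A `|` B)%fset => C /=; rewrite fsubUset => /andP[].
Qed.

Lemma big_fset_subD {I : choiceType} {V : zmodType} {A B : {fset I}} (F : I -> V) :
  (A `<=` B)%fset ->
  \sum_(i <- B) F i = \sum_(i <- A) F i + \sum_(i <- (B `\` A)%fset) F i.
Proof.
move=> AB; rewrite (big_fsetID _ (mem A)); congr (_ + _); apply: eq_fbigl => i;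
  rewrite !inE /=; last by rewrite andbC.
by apply/andP/idP => [[]//|iA]; split=> //; apply: (fsubsetP AB).
Qed.

Section UnorderedSums.
Context {K : numFieldType} {I : choiceType}.
Implicit Types (x y : I -> K) (l : K).

Lemma cvg_partial_sumD {x y lx ly} :
  partial_sum x @ totally --> lx -> partial_sum y @ totally --> ly ->
  partial_sum (Defs.addf x y) @ totally --> lx + ly.
Proof.
move=> xl yl; have -> : partial_sum (Defs.addf x y) = partial_sum x \+ partial_sum y.
  by apply: funext => A; rewrite /partial_sum /Defs.addf big_split.
exact: cvgD.
Qed.

Lemma cvg_partial_sumZ (c : K) {x l} :
  partial_sum x @ totally --> l -> partial_sum (scalef c x) @ totally --> c * l.
Proof.
move=> xl; have -> : partial_sum (scalef c x) = fun A => c * partial_sum x A.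
  by apply: funext => A; rewrite /partial_sum /scalef mulr_sumr.
exact: cvgMl_tmp.
Qed.

Lemma usum_single x i0 : (forall i, i != i0 -> x i = 0) -> usum x = x i0.
Proof.
move=> x0; apply: cvg_lim => //; apply: cvg_near_cst; exists [fset i0]%fset => // B.
rewrite /= fsub1set => i0B; rewrite /partial_sum (big_fsetD1 i0 i0B) /=.
by rewrite big1_fset ?addr0 // => i; rewrite !inE => /andP[/x0].
Qed.

Lemma usum_reindex {J : choiceType} {x l} {P : pred J} {h : J -> I} (h' : I -> J) :
  partial_sum x @ totally --> l ->
  (forall i, P (h' i) /\ h (h' i) = i) -> {in P &, injective h} ->
  usum (fun j => if P j then x (h j) else 0) = l.
Proof.
move=> xl h'K h_inj; apply: cvg_lim => //.
pose hP (B : {fset J}) := (h @` [fset j in B | P j])%fset.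
have -> : partial_sum (fun j => if P j then x (h j) else 0) = partial_sum x \o hP.
  apply: funext => B; rewrite /partial_sum /hP /= big_imfset /=.
    by rewrite -big_fset_condE -big_mkcond.
  by move=> j1 j2; rewrite !inE => /andP[_ ?] /andP[_ ?]; apply: h_inj.
apply: cvg_comp xl => Q [A _ AQ]; exists (h' @` A)%fset => // B /= h'AB.
apply: AQ; apply/fsubsetP => i iA; apply/imfsetP; exists (h' i).
  by rewrite !inE (fsubsetP h'AB) ?(h'K i).1 //; apply/imfsetP; exists i.
by rewrite (h'K i).2.
Qed.

End UnorderedSums.

Section AbsolutelySummable.
Context {R : realType} {I : choiceType}.
Local Notation C := (Cplx R).
Implicit Types (x y : I -> C) (a : I -> R).

Definition abs_summable x :=
  exists M : R, forall A : {fset I}, \sum_(i <- A) normc (x i) <= M.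

Lemma sum_tail_lt {a M} : (forall A : {fset I}, \sum_(i <- A) a i <= M) ->
  forall e, 0 < e -> exists A0 : {fset I},
    forall B, (A0 `<=` B)%fset -> \sum_(i <- (B `\` A0)%fset) a i < e.
Proof.
move=> a_le e e_gt0; pose sums := range (fun A : {fset I} => \sum_(i <- A) a i).
have sums_sup : has_sup sums.
  by split; [exists (\sum_(i <- fset0) a i), fset0 | exists M => _ [A _ <-]].
have [_ [A0 _ <-] A0_adh] := sup_adherent e_gt0 sums_sup.
exists A0 => B A0B; have : \sum_(i <- B) a i <= sup sums.
  by apply: sup_upper_bound => //; exists B.
rewrite (big_fset_subD _ A0B); lra.
Qed.

Lemma abs_summable_cvg {x} : abs_summable x -> partial_sum x @ totally --> usum x.
Proof.
move=> [M x_le]; apply: complex_complete; apply/cauchyP => e /gt0_complex[-> e_gt0].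
have [A0 tail_lt] := sum_tail_lt x_le _ e_gt0.
exists (partial_sum x A0), A0 => // B /= A0B.
rewrite -ball_normE /= /partial_sum (big_fset_subD _ A0B) opprD addrA subrr add0r.
rewrite normrN; apply: le_lt_trans (ler_norm_sum _ _ _) _.
by rewrite -(rmorph_sum (real_complex R)) ltcR; apply: tail_lt.
Qed.

Lemma usumD x y :
  abs_summable x -> abs_summable y -> usum (Defs.addf x y) = usum x + usum y.
Proof.
move=> /abs_summable_cvg xl /abs_summable_cvg yl.
by have := cvg_partial_sumD xl yl; apply: cvg_lim.
Qed.

Lemma usumZ c x : abs_summable x -> usum (scalef c x) = c * usum x.
Proof. by move=> /abs_summable_cvg /(cvg_partial_sumZ c); apply: cvg_lim. Qed.

Lemma normc_usum_le x M :
  (forall A : {fset I}, \sum_(i <- A) normc (x i) <= M) -> normc (usum x) <= M.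
Proof.
move=> x_le; have /cvg_normc xl := abs_summable_cvg (ex_intro _ M x_le).
apply: (cvgr_to_le xl); apply: nearW => B; apply: le_trans (x_le B).
rewrite -norm_lecR rmorph_sum; exact: ler_norm_sum.
Qed.

Lemma usum_real {a M} : (forall i, 0 <= a i) ->
  (forall A : {fset I}, \sum_(i <- A) a i <= M) ->
  exists2 L : R, usum (fun i => (a i)%:C : C) = L%:C &
    forall A : {fset I}, \sum_(i <- A) a i <= L.
Proof.
move=> a_ge0 a_le.
have normc_a i : normc (a i)%:C = a i.
  by rewrite /= expr0n addr0 sqrtr_sqr ger0_norm.
have /abs_summable_cvg al : abs_summable (fun i => (a i)%:C : C).
  by exists M => A; under eq_bigr do rewrite normc_a.
have partial_real :
    partial_sum (fun i => (a i)%:C : C) = fun B => (\sum_(i <- B) a i)%:C.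
  by apply: funext => B; rewrite /partial_sum rmorph_sum.
rewrite partial_real in al.
exists (Re (usum (fun i => (a i)%:C : C))).
  have Im0 : Im (usum (fun i => (a i)%:C : C)) = 0.
    apply/le_anti/andP; split;
      [apply: (cvgr_to_le (cvg_Im al)) | apply: (cvgr_to_ge (cvg_Im al))];
      exact: nearW.
  by case: (usum _) Im0 => ? ? /= ->.
move=> A; apply: (cvgr_to_ge (cvg_Re al)); exists A => // B /= AB.
by rewrite (big_fset_subD _ AB) lerDl sumr_ge0.
Qed.

End AbsolutelySummable.

Lemma ler_normMl {K : numFieldType} {a k b : K} :
  0 <= a -> a <= k * b -> 0 <= b -> a <= `|k| * b.
Proof.
move=> a_ge0 a_le b_ge0; have kb_ge0 : 0 <= k * b := le_trans a_ge0 a_le.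
by rewrite -(ger0_norm b_ge0) -normrM ger0_norm.
Qed.

Section IdempotentSpan.
Context {K : numFieldType} {S : choiceType} {op : S -> S -> S} {w : S -> K}.
Context {E : completeNormedModType K} {la : (S -> K) -> E -> E}
  {ra : E -> (S -> K) -> E} {D : (S -> K) -> E -> K} (e : S -> K).
Hypotheses (bimod : banach_bimodule op w la ra) (der : bounded_derivation op w la ra D).
Hypotheses (e_l1 : in_l1 w e) (e_idem : Defs.conv op e e = e)
  (e_span : forall f, in_l1 w f -> exists c, f = scalef c e).

Let a x := ra x e.
Let b x := la e x.
Let d := D e.

Let a_idem x : a (a x) = a x. Proof. by rewrite /a -(ra_assoc bimod) ?e_idem. Qed.
Let b_idem x : b (b x) = b x. Proof. by rewrite /b -(la_assoc bimod) ?e_idem. Qed.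
Let ab_comm x : a (b x) = b (a x). Proof. by rewrite /a /b (lra_assoc bimod). Qed.

Lemma derivation_idempotent_split x : d x = d (a x) + d (b x).
Proof. by rewrite /d -{1}e_idem (D_leibniz der). Qed.

Lemma derivation_idempotent_corner x : d (b (a x)) = 0.
Proof.
by apply: (addrI (d (a x))); rewrite addr0 [RHS]derivation_idempotent_split a_idem.
Qed.

Let phi x := d (a x) - d (b x).

Let phiD x y : phi (x + y) = phi x + phi y.
Proof.
rewrite /phi /a /b /d (ra_addl bimod) // (la_addr bimod) //.
by rewrite !(D_addr der) // opprD addrACA.
Qed.

Let phiZ c x : phi (c *: x) = c * phi x.
Proof.
rewrite /phi /a /b /d (ra_scalel bimod) // (la_scaler bimod) //.
by rewrite !(D_scaler der) // mulrBr.
Qed.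

Let phi_bounded : exists M : K, forall x, `|phi x| <= M * `|x|.
Proof.
have [Cd Cd_le] := D_bounded der; have [Cl Cl_le] := la_bounded bimod.
have [Cr Cr_le] := ra_bounded bimod; pose ne := l1norm w e.
exists (`|Cd * ne| * `|Cr * ne| + `|Cd * ne| * `|Cl * ne|) => x.
rewrite /phi mulrDl; apply: le_trans (ler_normB _ _) _; apply: lerD;
  apply: le_trans (ler_normMl (normr_ge0 _) (Cd_le _ _ e_l1) (normr_ge0 _)) _;
  rewrite -mulrA ler_wpM2l //; apply: ler_normMl => //; [exact: Cr_le | exact: Cl_le].
Qed.

Lemma idempotent_span_inner : inner_derivation w la ra D.
Proof.
exists phi; split; [exact: phiD | exact: phiZ | exact: phi_bounded |].
move=> f x /e_span[c ->].
rewrite (D_scalel der) // (ra_scaler bimod) // (la_scalel bimod) // !phiZ -mulrBr.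
congr (_ * _); rewrite /phi -/(a x) -/(b x) a_idem b_idem ab_comm derivation_idempotent_corner.
by rewrite [LHS]derivation_idempotent_split subr0 sub0r opprK.
Qed.

End IdempotentSpan.

Section Singleton.
Variables (K : numFieldType) (S : choiceType) (op : S -> S -> S) (w : S -> K).

Lemma amenable_l1_singleton s1 :
  (forall s, s = s1) -> 0 <= w s1 -> amenable_l1 op w.
Proof.
move=> all_s1 w_ge0 E la ra bimod D der.
pose one : S -> K := fun _ => 1.
apply: (idempotent_span_inner one bimod der).
- exists (w s1) => A; have : (A `<=` [fset s1])%fset.
    by apply/fsubsetP => s _; rewrite (all_s1 s) inE.
  by rewrite fsubset1 => /orP[/eqP -> | /eqP ->];
    rewrite ?big_seq_fset1 ?normr1 ?mul1r // big_seq_fset0.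
- apply: funext => u; rewrite /Defs.conv (usum_single _ (s1, s1)).
    by rewrite /= (all_s1 (op s1 s1)) (all_s1 u) eqxx mulr1.
  by move=> [s t]; rewrite (all_s1 s) (all_s1 t) eqxx.
- by move=> f _; exists (f s1); apply: funext => s; rewrite /scalef mulr1 (all_s1 s).
Qed.

End Singleton.

Definition delta {K : numFieldType} {S : eqType} (s : S) : S -> K :=
  fun t => if t == s then 1 else 0.

Lemma usum_delta {K : numFieldType} {S : choiceType} (s : S) : usum (delta s : S -> K) = 1.
Proof. by rewrite (usum_single _ s) => [|t /negbTE]; rewrite /delta ?eqxx // => ->. Qed.

Lemma in_l1_delta {K : numFieldType} {S : choiceType} (w : S -> K) s :
  0 <= w s -> in_l1 w (delta s).
Proof.
move=> w_ge0; exists (w s) => A; case: (boolP (s \in A)) => [sA | sNA].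
  rewrite (big_fsetD1 s sA) /= big1_fset => [|t]; last first.
    by rewrite !inE /delta => /andP[/negbTE -> _]; rewrite normr0 mul0r.
  by rewrite /delta eqxx normr1 mul1r addr0.
rewrite big1_fset // => t tA _; rewrite /delta; case: eqP => [ts|_].
  by move: tA; rewrite ts (negbTE sNA).
by rewrite normr0 mul0r.
Qed.

Section WeightedL1.
Context {R : realType} {S : choiceType} {w : S -> R}.
Hypothesis w_ge1 : forall s, 1 <= w s.
Local Notation C := (Cplx R).
Local Notation W := (fun s => Complex (w s) 0 : C).
Implicit Types f g : S -> C.

Lemma sum_norm_weight f (A : {fset S}) :
  \sum_(i <- A) `|f i| * W i = (\sum_(i <- A) normc (f i) * w i)%:C.
Proof. by rewrite rmorph_sum; apply: eq_bigr => i _; rewrite rmorphM. Qed.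

Lemma in_l1_bound {f} :
  in_l1 W f -> exists M : R, forall A : {fset S}, \sum_(i <- A) normc (f i) * w i <= M.
Proof.
by case=> M f_le; exists (Re M) => A; have := f_le A; rewrite sum_norm_weight lecE => /andP[].
Qed.

Lemma in_l1_abs_summable {f} : in_l1 W f -> abs_summable f.
Proof.
move=> /in_l1_bound[M f_le]; exists M => A; apply: le_trans (f_le A).
by apply: ler_sum => i _; rewrite ler_peMr ?normc_ge0.
Qed.

Lemma l1norm_real {f} : in_l1 W f ->
  exists2 L : R, l1norm W f = L%:C &
    forall A : {fset S}, \sum_(i <- A) normc (f i) * w i <= L.
Proof.
move=> /in_l1_bound[M f_le].
have a_ge0 i : 0 <= normc (f i) * w i.
  by rewrite mulr_ge0 ?normc_ge0 // (le_trans ler01).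
have [L sumL L_ge] := usum_real a_ge0 f_le.
exists L; last exact: L_ge.
by rewrite -sumL /l1norm; congr usum; apply: funext => i; rewrite rmorphM.
Qed.

Lemma norm_usum_le_l1norm f : in_l1 W f -> `|usum f| <= l1norm W f.
Proof.
move=> f_l1; have [L -> f_le] := l1norm_real f_l1.
rewrite norm_lecR; apply: normc_usum_le => A; apply: le_trans (f_le A).
by apply: ler_sum => i _; rewrite ler_peMr ?normc_ge0.
Qed.

Lemma norm_weight_le_l1norm f s : in_l1 W f -> `|f s| * W s <= l1norm W f.
Proof.
move=> f_l1; have [L -> f_le] := l1norm_real f_l1.
by have := f_le [fset s]%fset; rewrite big_seq_fset1 -lecR rmorphM.
Qed.

End WeightedL1.

Section L1Functionals.
Context {R : realType} {S : choiceType} (op : S -> S -> S) (w : S -> R).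
Local Notation C := (Cplx R).
Local Notation W := (fun s => Complex (w s) 0 : C).
Implicit Types (f g : S -> C) (chi : (S -> C) -> C).

Record bounded_functional chi : Prop := {
  functionalD : forall f g, in_l1 W f -> in_l1 W g ->
    chi (Defs.addf f g) = chi f + chi g;
  functionalZ : forall c f, in_l1 W f -> chi (scalef c f) = c * chi f;
  functional_bounded : exists M, forall f, in_l1 W f -> `|chi f| <= M * l1norm W f
}.

Definition l1_character chi := bounded_functional chi /\
  forall f g, in_l1 W f -> in_l1 W g -> chi (Defs.conv op f g) = chi f * chi g.

End L1Functionals.

Section PointDerivations.
Context {R : realType} {S : choiceType} {op : S -> S -> S} {w : S -> R}.
Local Notation C := (Cplx R).
Local Notation W := (fun s => Complex (w s) 0 : C).
Implicit Types (f g : S -> C).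
Context {alpha beta d : (S -> C) -> C}.
Hypotheses (alpha_char : l1_character op w alpha) (beta_char : l1_character op w beta).
Hypotheses (d_bounded : bounded_functional w d)
  (d_leibniz : forall f g, in_l1 W f -> in_l1 W g ->
    d (Defs.conv op f g) = d g * beta f + d f * alpha g).

Let la f (x : C) : C := alpha f * x.
Let ra (x : C) f : C := beta f * x.
Let D f (x : C) : C := d f * x.

Lemma character_bimodule : banach_bimodule op W la ra.
Proof.
have [[alphaD alphaZ [Ma Ma_le]] alphaM] := alpha_char.
have [[betaD betaZ [Mb Mb_le]] betaM] := beta_char.
split; rewrite /la /ra => *.
- by rewrite alphaD // mulrDl.
- by rewrite alphaZ // -mulrA.
- exact: mulrDr.
- exact: mulrCA.
- by rewrite betaD // mulrDl.
- by rewrite betaZ // -mulrA.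
- exact: mulrDr.
- exact: mulrCA.
- by rewrite alphaM // mulrA.
- by rewrite betaM // mulrCA mulrA.
- exact: mulrCA.
- by exists Ma => f x f_l1; rewrite normrM ler_wpM2r ?Ma_le.
- by exists Mb => f x f_l1; rewrite normrM ler_wpM2r ?Mb_le.
Qed.

Lemma point_derivation : bounded_derivation op W la ra D.
Proof.
have [dD dZ [Md Md_le]] := d_bounded.
split; rewrite /D /la /ra => *.
- exact: mulrDr.
- exact: mulrCA.
- by rewrite dD // mulrDl.
- by rewrite dZ // mulrA.
- by exists Md => f x f_l1; rewrite normrM ler_wpM2r ?Md_le.
- by rewrite d_leibniz // mulrDl !mulrA.
Qed.

Lemma inner_point_derivation : inner_derivation W la ra D ->
  exists c, forall f, in_l1 W f -> d f = c * (beta f - alpha f).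
Proof.
move=> [phi [_ phiZ _ phi_inner]]; exists (phi 1) => f f_l1.
have phi_scale (c : C) : phi c = c * phi 1.
  by rewrite -phiZ; congr phi; rewrite -[LHS]mulr1.
have := phi_inner f 1 f_l1; rewrite /D /ra /la.
rewrite (phi_scale (beta f * 1)) (phi_scale (alpha f * 1)) !mulr1 => ->.
by rewrite -mulrBl mulrC.
Qed.

Lemma point_derivation_not_amenable {f0 f1} : in_l1 W f0 -> in_l1 W f1 ->
  beta f0 - alpha f0 = beta f1 - alpha f1 -> d f0 != d f1 -> ~ amenable_l1 op W.
Proof.
move=> f0_l1 f1_l1 same_diff /eqP d_neq amen.
have [c d_eq] := inner_point_derivation (amen C la ra character_bimodule D point_derivation).
by apply: d_neq; rewrite !d_eq // same_diff.
Qed.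

End PointDerivations.

Lemma weight_ge1 {R : realType} {S : choiceType} {op : S -> S -> S} {w : S -> R} :
  left_zero_sg op \/ right_zero_sg op -> is_weight op w -> forall s, 1 <= w s.
Proof.
by move=> zero [w_gt0 w_sub] s; have := w_sub s s; case: zero => ->; rewrite ler_pMr.
Qed.

Section ZeroSemigroups.
Context {R : realType} {S : choiceType} {op : S -> S -> S} {w : S -> R}.
Hypothesis w_ge1 : forall s, 1 <= w s.
Local Notation C := (Cplx R).
Local Notation W := (fun s => Complex (w s) 0 : C).
Implicit Types f g : S -> C.

Lemma conv_right_zero f g :
  right_zero_sg op -> abs_summable f -> Defs.conv op f g = scalef (usum f) g.
Proof.
move=> rz f_sum; apply: funext => u; rewrite /Defs.conv /scalef -[RHS]mulrC.
have -> : (fun p : S * S => if op p.1 p.2 == u then f p.1 * g p.2 else 0) =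
    fun p => if p.2 == u then scalef (g u) f p.1 else 0.
  by apply: funext => -[s t] /=; rewrite rz; case: eqP => // ->; rewrite mulrC.
apply: (usum_reindex (fun s => (s, u)) (cvg_partial_sumZ _ (abs_summable_cvg f_sum))).
  by move=> s; rewrite /= eqxx.
by move=> [s1 t1] [s2 t2] /eqP /= -> /eqP /= -> /= ->.
Qed.

Lemma conv_left_zero f g :
  left_zero_sg op -> abs_summable g -> Defs.conv op f g = scalef (usum g) f.
Proof.
move=> lz g_sum; apply: funext => u; rewrite /Defs.conv /scalef -[RHS]mulrC.
have -> : (fun p : S * S => if op p.1 p.2 == u then f p.1 * g p.2 else 0) =
    fun p => if p.1 == u then scalef (f u) g p.2 else 0.
  by apply: funext => -[s t] /=; rewrite lz; case: eqP => // ->.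
apply: (usum_reindex (fun t => (u, t)) (cvg_partial_sumZ _ (abs_summable_cvg g_sum))).
  by move=> t; rewrite /= eqxx.
by move=> [s1 t1] [s2 t2] /eqP /= -> /eqP /= -> /= ->.
Qed.

Lemma usum_bounded_functional : bounded_functional w usum.
Proof.
split.
- by move=> f g /(in_l1_abs_summable w_ge1) ? /(in_l1_abs_summable w_ge1) ?; exact: usumD.
- by move=> c f /(in_l1_abs_summable w_ge1); exact: usumZ.
- by exists 1 => f f_l1; rewrite mul1r (norm_usum_le_l1norm w_ge1).
Qed.

Lemma eval_bounded_functional s : bounded_functional w (fun f => f s).
Proof.
split=> //; exists (W s)^-1 => f f_l1.
have W_gt0 : 0 < W s by rewrite ltcR (lt_le_trans ltr01).
by rewrite mulrC ler_pdivlMr // (norm_weight_le_l1norm w_ge1).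
Qed.

Lemma zero_character : l1_character op w (fun _ => 0).
Proof.
split=> [|f g _ _]; last by rewrite mulr0.
split=> [f g _ _ | c f _ |]; [by rewrite addr0 | by rewrite mulr0 |].
by exists 0 => f _; rewrite normr0 mul0r.
Qed.

Lemma usum_character : left_zero_sg op \/ right_zero_sg op -> l1_character op w usum.
Proof.
move=> zero; split=> [|f g f_l1 g_l1]; first exact: usum_bounded_functional.
have f_sum := in_l1_abs_summable w_ge1 f_l1; have g_sum := in_l1_abs_summable w_ge1 g_l1.
case: zero => zero.
- by rewrite conv_left_zero // usumZ // mulrC.
- by rewrite conv_right_zero // usumZ.
Qed.

Lemma zero_semigroup_not_amenable {s0 s1 : S} :
  left_zero_sg op \/ right_zero_sg op -> s0 != s1 -> ~ amenable_l1 op W.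
Proof.
move=> zero s01.
have delta_l1 s : in_l1 W (delta s) by apply: in_l1_delta; rewrite lecR (le_trans ler01).
have eval_neq : (delta s0 : S -> C) s1 != delta s1 s1.
  by rewrite /delta eqxx [s1 == s0]eq_sym (negbTE s01) eq_sym oner_eq0.
have same_usum : usum (delta s0 : S -> C) = usum (delta s1) by rewrite !usum_delta.
have char_usum := usum_character zero.
case: zero => zero.
- apply: (point_derivation_not_amenable char_usum zero_character (eval_bounded_functional s1)
    _ (delta_l1 s0) (delta_l1 s1)) => [f g f_l1 g_l1 | | //]; last by rewrite same_usum.
  rewrite (conv_left_zero _ _ zero (in_l1_abs_summable w_ge1 g_l1)) /scalef.
  by rewrite (mulr0 (g s1)) add0r mulrC.
- apply: (point_derivation_not_amenable zero_character char_usum (eval_bounded_functional s1)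
    _ (delta_l1 s0) (delta_l1 s1)) => [f g f_l1 g_l1 | | //]; last by rewrite same_usum.
  rewrite (conv_right_zero _ _ zero (in_l1_abs_summable w_ge1 f_l1)) /scalef.
  by rewrite (mulr0 (f s1)) addr0 mulrC.
Qed.

End ZeroSemigroups.

Theorem proposition2p5 (R : realType) (S : choiceType) (op : S -> S -> S)
    (w : S -> R) :
  associative op ->
  (left_zero_sg op \/ right_zero_sg op) ->
  is_weight op w ->
  (exists s : S, True) ->
  (amenable_l1 (K := Cplx R) op (fun s => (Complex (w s) 0 : Cplx R))
    <-> exists s0 : S, forall s : S, s = s0).
Proof.
move=> _ zero weight [s0 _]; have w_ge1 := weight_ge1 zero weight.
split=> [amen | [s1 all_s1]]; last first.
  by apply: amenable_l1_singleton all_s1 _; rewrite lecR (le_trans ler01).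
apply: contrapT => not_singleton.
have /existsNP[s1 /eqP s10] : ~ forall s, s = s0.
  by move=> all_s0; apply: not_singleton; exists s0.
exact: (zero_semigroup_not_amenable w_ge1 zero s10 amen).
Qed.
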